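(* Let $G$ be an infinite complete metrizable abelian torsion topological group. The following are equivalent: (i) $G$ is not NSS; (ii) $G$ contains a subgroup topologically isomorphic to an infinite product (with the Tychonoff product topology) of finite non-trivial (discrete) groups. In particular, if $G$ is not NSS, then $G$ contains an infinite compact zero-dimensional subgroup.
   Context: A topological group is NSS if it has a neighbourhood of the identity containing no non-trivial subgroup. A torsion group is one in which every element has finite order. *)

From HB Require Import structures.
From mathcomp Require Import all_boot all_order all_algebra all_fingroup.
From mathcomp Require Import all_classical all_reals all_analysis.
From mathcomp Require Import Rstruct.
From Stdlib Require Rdefinitions.
Notation R := Rdefinitions.R.

Set Implicit Arguments.
Unset Strict Implicit.
Unset Printing Implicit Defensive.

Import Order.TTheory GRing.Theory Num.Theory.
Local Open Scope classical_set_scope.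
Local Open Scope ring_scope.

Definition is_subgroup (G : zmodType) (S : set G) : Prop :=
  S 0 /\ (forall x y, S x -> S y -> S (x - y)).

Definition torsion_group (G : zmodType) : Prop :=
  forall x : G, exists n : nat, (0 < n)%N /\ x *+ n = 0.

Definition NSS (G : topologicalZmodType) : Prop :=
  exists U : set G, nbhs (0 : G) U /\
    forall S : set G, is_subgroup S -> S `<=` U -> S = [set 0].

Definition metrizable (T : topologicalType) : Prop :=
  exists d : T -> T -> R,
    (forall x y, 0 <= d x y) /\
    (forall x y, d x y = 0 <-> x = y) /\
    (forall x y, d x y = d y x) /\
    (forall x y z, d x z <= d x y + d y z) /\
    (forall (x : T) (A : set T),
        nbhs x A <-> exists e : R, 0 < e /\ forall y, d x y < e -> A y).

(* Completeness of a topological abelian group w.r.t. its (two-sided = left =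
   right) group uniformity: every proper filter which is Cauchy in the group
   sense converges. *)
Definition group_cauchy (G : topologicalZmodType) (F : set_system G) : Prop :=
  forall U : set G, nbhs (0 : G) U ->
    exists A, F A /\ forall x y, A x -> A y -> U (x - y).

Definition group_complete (G : topologicalZmodType) : Prop :=
  forall F : set_system G, ProperFilter F -> group_cauchy F ->
    exists x : G, F --> x.

(* Zero-dimensional subspace H of T (standard definition): every point of H
   has a neighbourhood base (in the subspace topology) of relatively clopen
   sets. *)
Definition zero_dim_subspace (T : topologicalType) (H : set T) : Prop :=
  forall x, H x -> forall U : set T, nbhs x U ->
    exists O C : set T, [/\ open O, closed C, H `&` O = H `&` C,
                           O x & H `&` O `<=` U].

Definition top_embedding (X Y : topologicalType) (phi : X -> Y) : Prop :=
  [/\ continuous phi, injective phi &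
      forall U : set X, open U ->
        exists V : set Y, open V /\ phi @` U = V `&` range phi].

(* G contains a subgroup topologically isomorphic to the Tychonoff product of
   the infinite family (F i)_{i in I} of finite non-trivial discrete groups:
   there is an injective continuous homomorphism from the product which is a
   homeomorphism onto its image (the image is then the subgroup). *)
Definition contains_infinite_product_of_finite_groups
    (G : topologicalZmodType) : Prop :=
  exists (I : Type) (F : I -> finGroupType),
    ~ finite_set [set: I] /\
    (forall i, (1 < #|F i|)%N) /\
    exists phi : prod_topology (fun i => discrete_topology (F i)) -> G,
      (forall x y : prod_topology (fun i => discrete_topology (F i)),
          phi (fun i => ((x i : F i) * (y i : F i))%g) = phi x + phi y) /\
      top_embedding phi.

From HB Require Import structures.
From mathcomp Require Import all_boot all_order all_algebra all_fingroup.
From mathcomp Require Import all_classical all_reals all_analysis.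
From mathcomp Require Import Rstruct lra.
Import Order.TTheory GRing.Theory Num.Theory.
Local Open Scope classical_set_scope.
Local Open Scope ring_scope.
Set Implicit Arguments.
Unset Strict Implicit.
Unset Printing Implicit Defensive.

(* If G is not NSS, every neighbourhood of 0 contains a non-trivial finite
   cyclic subgroup.  Along neighbourhoods V_n shrinking to 0 with
   V_(n+1) + V_(n+1) <= V_n, pick x_n of order o_n > 1 with all multiples in
   V_n, such that no non-zero multiple of x_n is cancelled by a sum of three
   elements of V_(n+1).  By completeness every series sum_n k_n x_n
   (k_n mod o_n) converges; this is a continuous homomorphism from the compact
   group prod_n Z/o_n into G, injective because the first non-zero k_n cannot
   be cancelled by the tail, hence an embedding onto a compact zero-dimensional
   subgroup.  Conversely, in an infinite product of non-trivial groups every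
   neighbourhood of the identity contains the non-trivial subgroup of elements
   that vanish on some finite set of coordinates. *)

Section ZmodMultiples.
Variable M : zmodType.

Lemma mulrn_modn (y : M) o n : y *+ o = 0 -> y *+ (n %% o) = y *+ n.
Proof. by move=> yo; rewrite {2}(divn_eq n o) mulrnDr mulnC mulrnA yo mul0rn add0r. Qed.

Lemma opp_mulrn_order (y : M) o j : (0 < o)%N -> y *+ o = 0 ->
  - (y *+ j) = y *+ (o.-1 * j).
Proof.
move=> o_gt0 yo; apply/eqP; rewrite eq_sym -addr_eq0 -mulrnDr -mulSnr prednK //.
by rewrite mulrnA yo mul0rn.
Qed.

Lemma is_subgroup_mulrn (S : set M) y : is_subgroup S -> S y -> forall j, S (y *+ j).
Proof.
move=> [S0 SB] Sy; have Sny : S (- y) by rewrite -sub0r; exact: SB.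
elim=> [|j IH]; first by rewrite mulr0n.
by rewrite mulrSr -[y in _ + y]opprK; exact: SB.
Qed.

Lemma torsion_order (y : M) : torsion_group M -> y <> 0 ->
  exists m, [/\ (1 < m)%N, y *+ m = 0 & forall i, (0 < i < m)%N -> y *+ i <> 0].
Proof.
move=> torM y0.
have ex_order : exists n, (0 < n)%N && (y *+ n == 0).
  by have [n [n_gt0 yn]] := torM y; exists n; rewrite n_gt0 yn eqxx.
case: (ex_minnP ex_order) => m /andP[m_gt0 /eqP ym] m_min; exists m; split => //.
  by rewrite ltn_neqAle m_gt0 andbT; apply: contra_notN y0 => /eqP m1; rewrite -m1 mulr1n in ym.
move=> i /andP[i_gt0 lt_im] yi.
by have := m_min i; rewrite i_gt0 yi eqxx leqNgt lt_im => /(_ isT).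
Qed.

End ZmodMultiples.

Section TopologicalZmodule.
Variable G : topologicalZmodType.
Implicit Types (x y : G) (U W : set G).

Lemma addl_continuous x : continuous (fun y => x + y).
Proof.
move=> y; apply: (@continuous_comp _ _ _ (fun y => (x, y)) (fun p : G * G => p.1 + p.2)).
  by apply: cvg_pair; [exact: cvg_cst | exact: cvg_id].
exact: add_continuous.
Qed.

Lemma subl_continuous x : continuous (fun y => x - y).
Proof.
move=> y; apply: (@continuous_comp _ _ _ -%R (fun y => x + y)).
  exact: opp_continuous.
exact: addl_continuous.
Qed.

Lemma nbhs0_split_add U : nbhs (0 : G) U ->
  exists V : set G, [/\ nbhs (0 : G) V, V `<=` U & forall a b, V a -> V b -> U (a + b)].
Proof.
move=> U0; have := @add_continuous G (0, 0) U; rewrite /= addr0 => /(_ U0).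
move=> [[A B] /= [A0 B0] AB]; exists (A `&` B); split; first exact: filterI.
  move=> a [Aa _]; rewrite -[a]addr0.
  exact: (AB (a, 0)) (conj Aa (nbhs_singleton B0)).
by move=> a b [Aa _] [_ Bb]; exact: (AB (a, b)).
Qed.

Lemma nbhs_translate0 x U : nbhs x U -> nbhs (0 : G) [set y | U (x + y)].
Proof. by move=> Ux; have := @addl_continuous x 0 U; rewrite /= addr0; apply. Qed.

Lemma near_cvg_subl (T : Type) (F : set_system T) {FF : Filter F} (u : T -> G) l W :
  u @ F --> l -> nbhs (0 : G) W -> \forall t \near F, W (l - u t).
Proof.
move=> ul W0; apply: (ul [set y | W (l - y)]).
by have := @subl_continuous l l W; rewrite /= subrr; apply.
Qed.

Lemma zmod_cvgD (T : Type) (F : set_system T) {FF : Filter F} (u v : T -> G) a b :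
  u @ F --> a -> v @ F --> b -> (fun t => u t + v t) @ F --> a + b.
Proof.
by move=> ua vb; apply: continuous2_cvg => //; exact: (@add_continuous G (a, b)).
Qed.

Lemma not_NSS_nbhs0 W : ~ NSS G -> nbhs (0 : G) W ->
  exists2 y : G, y <> 0 & forall j, W (y *+ j).
Proof.
move=> notNSS W0.
have /existsNP [S /not_implyP [S_grp /not_implyP [SW S_ne0]]] :
    ~ (forall S, is_subgroup S -> S `<=` W -> S = [set 0]).
  by move=> W_triv; apply: notNSS; exists W.
have [y Sy y0] : exists2 y, S y & y <> 0.
  apply: contrapT => S_0; apply: S_ne0; rewrite predeqE => z; split; last first.
    by move=> ->; case: S_grp.
  by move=> Sz; apply: contrapT => z0; apply: S_0; exists z.
by exists y => // j; apply: SW; exact: is_subgroup_mulrn.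
Qed.

Lemma nbhs0_avoid_multiples y o : hausdorff_space G ->
  (forall i, (0 < i < o)%N -> y *+ i <> 0) ->
  nbhs (0 : G) [set z | forall i, (0 < i < o)%N -> y *+ i + z <> 0].
Proof.
move=> hausG y_ord.
have off_point (i : 'I_o) : \forall z \near (0 : G), (0 < i)%N -> y *+ i + z <> 0.
  have [i0|_] := ltnP 0 i; last exact: nearW.
  have yi_neq0 : - (y *+ i) <> 0.
    by move=> /eqP; rewrite oppr_eq0 => /eqP; apply: y_ord; rewrite i0 ltn_ord.
  have : open (~` [set - (y *+ i)]).
    exact/closed_openC/accessible_closed_set1/hausdorff_accessible.
  rewrite openE => /(_ 0 (nesym yi_neq0)); apply: filterS => z zi _ /eqP.
  by rewrite addrC addr_eq0 => /eqP.
apply: filterS (filter_forall (nbhs_filter (0 : G)) off_point) => z /= z_off i /andP[i0 io].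
exact: (z_off (Ordinal io)).
Qed.

End TopologicalZmodule.

Section Metrizable.
Variable T : topologicalType.
Hypothesis metrT : metrizable T.

Lemma metrizable_hausdorff : hausdorff_space T.
Proof.
have [d [d0 [deq [dsym [dtri dnbhs]]]]] := metrT.
move=> p q clpq; apply: contrapT => pq.
have dpq : 0 < d p q / 2.
  by rewrite divr_gt0 // lt_def d0 andbT; apply/eqP => /deq.
have ball_nbhs z : nbhs z [set y | d z y < d p q / 2] by apply/dnbhs; exists (d p q / 2).
have [z [/= pz qz]] := clpq _ _ (ball_nbhs p) (ball_nbhs q).
by have := dtri p z q; rewrite (dsym z q); lra.
Qed.

Lemma metrizable_nbhs_base (x : T) : exists B : nat -> set T,
  (forall n, nbhs x (B n)) /\ forall U, nbhs x U -> exists n, B n `<=` U.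
Proof.
have [d [_ [_ [_ [_ dnbhs]]]]] := metrT.
exists (fun n => [set y | d x y < n.+1%:R^-1]); split.
  by move=> n; apply/dnbhs; exists n.+1%:R^-1; rewrite invr_gt0.
move=> U /dnbhs [e [e0 eU]].
have [n ne] := filter_ex (near_infty_natSinv_lt (PosNum e0)).
by exists n => y /= dy; apply: eU; exact: lt_trans dy ne.
Qed.

End Metrizable.

Section CompactEmbedding.
Variables (X Y : topologicalType) (f : X -> Y).
Hypotheses (cptX : compact [set: X]) (hausY : hausdorff_space Y).
Hypotheses (f_cont : continuous f) (f_inj : injective f).

Lemma compact_image_closed A : closed A -> closed (f @` A).
Proof.
move=> clA; apply: (compact_closed hausY); apply: continuous_compact.
  exact: continuous_subspaceT.
exact: subclosed_compact clA cptX (subsetT A).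
Qed.

Lemma compact_image_open U : open U ->
  exists V : set Y, open V /\ f @` U = V `&` range f.
Proof.
move=> oU; exists (~` (f @` (~` U))); split.
  exact/closed_openC/compact_image_closed/open_closedC.
rewrite eqEsubset; split.
  move=> _ [x Ux <-]; split; last by exists x.
  by move=> [x' nUx' /f_inj ex]; apply: nUx'; rewrite ex.
move=> y [nfU [x _ fxy]]; exists x => //.
by apply: contrapT => nUx; apply: nfU; exists x.
Qed.

Lemma compact_top_embedding : top_embedding f.
Proof. by split => //; exact: compact_image_open. Qed.

Lemma compact_range : compact (range f).
Proof. by apply: continuous_compact => //; exact: continuous_subspaceT. Qed.

Lemma zero_dim_range :
  (forall (x : X) (U : set X), nbhs x U ->
    exists C, [/\ open C, closed C, C x & C `<=` U]) ->
  zero_dim_subspace (range f).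
Proof.
move=> clopen_base _ [x _ <-] U /f_cont /clopen_base [C [oC clC Cx CU]].
have [W [oW fCW]] := compact_image_open oC.
exists W, (f @` C); split => //.
- exact: compact_image_closed.
- by rewrite setIC -fCW; apply/seteqP; split => [y fCy|y []//]; split => //;
    case: fCy => x' _ <-; exists x'.
- by have [] : (W `&` range f) (f x) by rewrite -fCW; exists x.
- by rewrite setIC -fCW => _ [x' Cx' <-]; exact: CU.
Qed.

End CompactEmbedding.

Section DiscreteProduct.
Variables (I : Type) (T : I -> choiceType).
Local Notation P := (prod_topology (fun i => discrete_topology (T i))).

Definition cylinder (x : P) (J : set I) : set P := [set y | forall j, J j -> y j = x j].

Lemma nbhs_sub_cylinder (x : P) A : nbhs x A ->
  exists2 J, finite_set J & cylinder x J `<=` A.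
Proof.
move=> Ax; pose cylF := filter_from [set J : set I | finite_set J] (cylinder x).
have cylF_filter : Filter cylF.
  apply: filter_from_filter; first by exists set0 => //; exact: finite_set0.
  move=> J J' fJ fJ'; exists (J `|` J'); first by rewrite /= finite_setU.
  by move=> y xy; split => j Jj; apply: xy; [left | right].
have : cylF --> x.
  apply/cvg_sup => i B [C [[W oW <-] Wx CB]].
  exists [set i]; first exact: finite_set1.
  by move=> y yx; apply: CB => /=; rewrite yx.
by move=> /(_ _ Ax) [J]; exists J.
Qed.

End DiscreteProduct.

Section DiscreteProductCylinders.
Variables (I : eqType) (T : I -> choiceType).
Local Notation P := (prod_topology (fun i => discrete_topology (T i))).

Lemma nbhs_coord (x : P) i : nbhs x [set y : P | y i = x i].
Proof.
have := @proj_continuous I (fun i => discrete_topology (T i)) i x [set x i].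
by apply; exact: discrete_set1.
Qed.

Lemma cylinder_closed (x : P) J : closed (cylinder x J).
Proof.
rewrite -[cylinder x J]setCK; apply: open_closedC; rewrite openE => y.
move=> /existsNP [j /not_implyP [Jj yj]].
by apply: filterS (nbhs_coord y j) => z zj xz; apply: yj; rewrite -zj; exact: xz.
Qed.

Lemma nbhs_cylinder (x : P) J : finite_set J -> nbhs x (cylinder x J).
Proof.
move=> /finite_seqP [s ->]; elim: s => [|j s IH].
  by apply: filterS (filterT : nbhs x setT) => y _ j.
apply: filterS (filterI (nbhs_coord x j) IH) => y [yj ys] i /=.
by rewrite inE => /orP[/eqP -> // | /ys].
Qed.

Lemma cylinder_open (x : P) J : finite_set J -> open (cylinder x J).
Proof.
move=> fJ; rewrite openE => y xy.
by apply: filterS (nbhs_cylinder y fJ) => z yz j Jj; rewrite yz // xy.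
Qed.

Lemma discrete_prod_clopen_base (x : P) A : nbhs x A ->
  exists C, [/\ open C, closed C, C x & C `<=` A].
Proof.
move=> /nbhs_sub_cylinder [J fJ JA]; exists (cylinder x J); split => //.
- exact: cylinder_open.
- exact: cylinder_closed.
Qed.

End DiscreteProductCylinders.

Lemma discrete_prod_compact (I : eqType) (F : I -> finType) :
  compact [set: prod_topology (fun i => discrete_topology (F i))].
Proof.
have := @tychonoff I (fun i => discrete_topology (F i)) (fun i => setT)
  (fun i => @finite_compact (discrete_topology (F i)) setT finite_finset).
by congr compact; rewrite predeqE.
Qed.

Section ProductGroup.
Variables (I : Type) (F : I -> finGroupType).
Local Notation P := (prod_topology (fun i => discrete_topology (F i))).

Definition prod_mul (x y : P) : P := fun i => ((x i : F i) * (y i : F i))%g.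
Definition prod_inv (x : P) : P := fun i => ((x i : F i)^-1)%g.
Definition prod_one : P := fun i => (1 : F i)%g.

Lemma prod_cylinder_nontrivial J i : (1 < #|F i|)%N -> ~ J i ->
  exists2 e, cylinder prod_one J e & e <> prod_one.
Proof.
move=> /card_gt1P [a [b [_ _ ab]]] Ji.
have [g g1] : exists g : F i, g != 1%g.
  by case: (eqVneq a 1%g) => [a1 | a1]; [exists b; rewrite -a1 eq_sym | exists a].
pose e : P := fun j =>
  if pselect (i = j) is left ij then eq_rect i (fun j => F j) g j ij else (1 : F j)%g.
exists e.
  by move=> j Jj; rewrite /e; case: pselect => // ij; case: Ji; rewrite ij.
move=> /(congr1 (fun x : P => x i)); rewrite /e; case: pselect => // ii.
by rewrite (Prop_irrelevance ii erefl) /=; apply/eqP.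
Qed.

Variables (G : zmodType) (phi : P -> G).
Hypothesis phiM : forall x y, phi (prod_mul x y) = phi x + phi y.

Lemma prod_morph1 : phi prod_one = 0.
Proof.
apply: (addrI (phi prod_one)); rewrite addr0 -phiM; congr phi.
by apply: functional_extensionality_dep => i; rewrite /prod_mul mulg1.
Qed.

Lemma prod_morphV x : phi (prod_inv x) = - phi x.
Proof.
apply/eqP; rewrite -addr_eq0 -phiM -prod_morph1; apply/eqP; congr phi.
by apply: functional_extensionality_dep => i; rewrite /prod_mul mulVg.
Qed.

Lemma is_subgroup_prod_image (S : set P) : S prod_one ->
  (forall x y, S x -> S y -> S (prod_mul x (prod_inv y))) -> is_subgroup (phi @` S).
Proof.
move=> S1 S_sub; split; first by exists prod_one => //; exact: prod_morph1.
move=> _ _ [x Sx <-] [y Sy <-]; exists (prod_mul x (prod_inv y)); first exact: S_sub.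
by rewrite phiM prod_morphV.
Qed.

Lemma prod_morph_inj : (forall x, phi x = 0 -> x = prod_one) -> injective phi.
Proof.
move=> ker1 x y phixy.
have := ker1 (prod_mul x (prod_inv y)).
rewrite phiM prod_morphV phixy subrr => /(_ erefl) xy1.
apply: functional_extensionality_dep => i; apply/eqP; rewrite eq_mulgV1; apply/eqP.
exact: (congr1 (fun z : P => z i) xy1).
Qed.

End ProductGroup.

Lemma infinite_product_not_NSS (G : topologicalZmodType) :
  contains_infinite_product_of_finite_groups G -> ~ NSS G.
Proof.
move=> [I [F [infI [F_nontriv [phi [phiM [phi_cont phi_inj _]]]]]]] [U [U0 U_triv]].
have [J finJ JU] : exists2 J, finite_set J & cylinder (prod_one F) J `<=` phi @^-1` U.
  by apply: nbhs_sub_cylinder; apply: phi_cont; rewrite prod_morph1.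
have [i Ji] : exists i, ~ J i.
  apply: contrapT => J_all; apply: infI; apply: sub_finite_set finJ => i _.
  by apply: contrapT => Ji; apply: J_all; exists i.
have [e Je e1] := prod_cylinder_nontrivial (F_nontriv i) Ji.
have cylJ_grp : is_subgroup (phi @` cylinder (prod_one F) J).
  apply: is_subgroup_prod_image => // x y Jx Jy j Jj.
  by rewrite /prod_mul /prod_inv Jx // Jy // invg1 mulg1.
have cylJ0 : phi @` cylinder (prod_one F) J = [set 0].
  by apply: U_triv cylJ_grp _ => _ [x Jx <-]; exact: JU.
have : (phi @` cylinder (prod_one F) J) (phi e) by exists e.
by rewrite cylJ0 /= -(prod_morph1 phiM) => /phi_inj.
Qed.

Section CyclicChain.
Variable G : topologicalZmodType.

(* The three summands will be the next term of a series, the rest of a partial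
   sum, and the distance from that partial sum to the limit (see series_eq0). *)
Definition avoids (y : G) (n : nat) (W : set G) : Prop :=
  forall a b c i, (0 < i < n)%N -> W a -> W b -> W c -> y *+ i + (a + b + c) <> 0.

Record cyclic_chain (V : nat -> set G) (x : nat -> G) (ord : nat -> nat) : Prop :=
  CyclicChain {
    chain_nbhs : forall n, nbhs (0 : G) (V n);
    chain_add : forall n a b, V n.+1 a -> V n.+1 b -> V n (a + b);
    chain_order_gt1 : forall n, (1 < ord n)%N;
    chain_order : forall n, x n *+ ord n = 0;
    chain_mulrn : forall n j, V n (x n *+ j);
    chain_avoids : forall n, avoids (x n) (ord n) (V n.+1) }.

Definition chain_link (W C : set G) (y : G) (n : nat) (W' : set G) : Prop :=
  [/\ (1 < n)%N, y *+ n = 0, (forall j, W (y *+ j)), nbhs (0 : G) W' &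
      [/\ forall a b, W' a -> W' b -> W (a + b), W' `<=` C & avoids y n W']].

Hypotheses (hausG : hausdorff_space G) (torG : torsion_group G) (notNSS : ~ NSS G).

Lemma exists_chain_link W C : nbhs (0 : G) W -> nbhs (0 : G) C ->
  exists y n W', chain_link W C y n W'.
Proof.
move=> W0 C0; have [y y0 Wy] := not_NSS_nbhs0 notNSS W0.
have [n [n_gt1 yn y_ord]] := torsion_order torG y0.
have [U [U0 UWC U_add]] :=
  nbhs0_split_add (filterI (filterI W0 C0) (nbhs0_avoid_multiples hausG y_ord)).
have [W' [W'0 W'U W'_add]] := nbhs0_split_add U0.
exists y, n, W'; split => //; split.
- by move=> a b W'a W'b; have [[]] := UWC _ (W'_add _ _ W'a W'b).
- by move=> z /W'U /UWC [[]].
- move=> a b c i i_ord W'a W'b W'c.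
  by have [_ /(_ i i_ord)] := U_add _ _ (W'_add _ _ W'a W'b) (W'U _ W'c).
Qed.

Variable B : nat -> set G.
Hypothesis B_nbhs : forall n, nbhs (0 : G) (B n).

Lemma exists_cyclic_chain : exists V x ord, cyclic_chain V x ord /\ forall n, V n `<=` B n.
Proof.
have next (p : nat * set G) : exists r : G * nat * set G, nbhs (0 : G) p.2 ->
    chain_link p.2 (B p.1.+1) r.1.1 r.1.2 r.2.
  case: p => n W; have [W0|] := pselect (nbhs (0 : G) W); last by exists (0, 0%N, setT).
  by have [y [k [W' link]]] := exists_chain_link W0 (B_nbhs n.+1); exists (y, k, W').
have [f fP] := choice next.
pose V := fix V n := if n is m.+1 then (f (m, V m)).2 else B 0.
have V_nbhs n : nbhs (0 : G) (V n).
  by elim: n => [|n IH] //=; have [] := fP (n, V n) IH.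
exists V, (fun n => (f (n, V n)).1.1), (fun n => (f (n, V n)).1.2); split.
  by split=> n; have [? ? ? ? [? ? ?]] := fP (n, V n) (V_nbhs n).
by case=> [|n] //=; have [_ _ _ _ []] := fP (n, V n) (V_nbhs n).
Qed.

End CyclicChain.

Definition cyclic_factor (ord : nat -> nat) (n : nat) : finGroupType := 'Z_(ord n).

Section SeriesEmbedding.
Variables (G : topologicalZmodType) (V : nat -> set G) (x : nat -> G) (ord : nat -> nat).
Hypotheses (chainV : cyclic_chain V x ord) (hausG : hausdorff_space G).
Hypotheses (complG : group_complete G) (V_base : forall U, nbhs (0 : G) U -> exists n, V n `<=` U).
Local Notation P := (prod_topology (fun n => discrete_topology (cyclic_factor ord n))).

Definition series_term (k : P) n : G := x n *+ nat_of_ord (k n : 'Z_(ord n)).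
Definition partial_sum (k : P) N : G := \sum_(0 <= i < N) series_term k i.
Definition series (k : P) : G := xget 0 [set L | partial_sum k @ \oo --> L].

Lemma chain_zero n : V n 0.
Proof. exact: nbhs_singleton (chain_nbhs chainV n). Qed.

Lemma chain_mono m n z : (m <= n)%N -> V n z -> V m z.
Proof.
move=> /subnKC <-; elim: (n - m)%N z => [|d IH] z; first by rewrite addn0.
rewrite addnS => Vz; apply: IH; rewrite -[z]addr0.
exact: (chain_add chainV Vz (chain_zero _)).
Qed.

Lemma chain_sum (s : nat -> G) n a b : (forall i, V i (s i)) -> (n < a)%N ->
  V n (\sum_(a <= i < b) s i).
Proof.
move=> Vs; have tail d c : V c (\sum_(c.+1 <= i < c.+1 + d) s i).
  elim: d c => [|d IH] c; first by rewrite addn0 big_geq //; exact: chain_zero.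
  rewrite addnS big_nat_recl ?leq_addr //.
  have -> : \sum_(c.+1 <= i < c.+1 + d) s i.+1 = \sum_(c.+2 <= i < c.+2 + d) s i.
    by rewrite [RHS]big_add1 addSn.
  exact: (chain_add chainV (Vs _) (IH _)).
case: a => [//|a]; rewrite ltnS => na; apply: chain_mono na _.
have [ba|ab] := leqP b a.+1; first by rewrite big_geq //; exact: chain_zero.
by rewrite -(subnKC (ltnW ab)); exact: tail.
Qed.

Lemma chain_series_term k i : V i (series_term k i).
Proof. exact: (chain_mulrn chainV). Qed.

Lemma chain_opp_series_term k i : V i (- series_term k i).
Proof.
have ord_gt0 := ltnW (chain_order_gt1 chainV i).
rewrite /series_term (opp_mulrn_order _ ord_gt0 (chain_order chainV i)).
exact: (chain_mulrn chainV).
Qed.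

Lemma partial_sum_sub k n N N' : (n < N)%N -> (n < N')%N ->
  V n (partial_sum k N - partial_sum k N').
Proof.
move=> nN nN'; rewrite /partial_sum; have [NN'|N'N] := leqP N N'.
  rewrite (big_cat_nat (leq0n N) NN') /= opprD addrA subrr add0r -sumrN.
  exact: chain_sum (chain_opp_series_term k) nN.
rewrite (big_cat_nat (leq0n N') (ltnW N'N)) /= addrAC subrr add0r.
exact: chain_sum (chain_series_term k) nN'.
Qed.

Lemma partial_sum_cvg k : partial_sum k @ \oo --> series k.
Proof.
have : exists L : G, partial_sum k @ \oo --> L.
  apply: complG => U /V_base [n VU].
  exists (partial_sum k @` [set N | (n < N)%N]); split.
    by exists n.+1 => // N /= nN; exists N.
  by move=> _ _ [N nN <-] [N' nN' <-]; apply: VU; exact: partial_sum_sub.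
exact: xgetPex.
Qed.

Lemma partial_sumM k k' N :
  partial_sum (prod_mul k k') N = partial_sum k N + partial_sum k' N.
Proof.
rewrite /partial_sum -big_split; apply: eq_bigr => i _ /=.
have x_ord : x i *+ (Zp_trunc (ord i)).+2 = 0.
  by rewrite Zp_cast ?(chain_order chainV) ?(chain_order_gt1 chainV).
by rewrite /series_term -mulrnDr; exact: (mulrn_modn _ x_ord).
Qed.

Lemma seriesM k k' : series (prod_mul k k') = series k + series k'.
Proof.
apply: (cvg_unique hausG (@partial_sum_cvg (prod_mul k k'))).
have -> : partial_sum (prod_mul k k') = (fun N => partial_sum k N + partial_sum k' N).
  by apply/funext => N; exact: partial_sumM.
exact: (zmod_cvgD (@partial_sum_cvg k) (@partial_sum_cvg k')).
Qed.

Lemma partial_sum_from k m N :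
  (forall i, (i < m)%N -> (k i : cyclic_factor ord i) = 1%g) ->
  partial_sum k N = \sum_(m <= i < N) series_term k i.
Proof.
move=> k1; have term0 i : (i < m)%N -> series_term k i = 0.
  by move=> /k1 ki; rewrite /series_term ki mulr0n.
rewrite /partial_sum; have [Nm|mN] := leqP N m.
  rewrite [RHS]big_geq // big_nat_cond big1 // => i /andP[/andP[_ iN] _].
  exact/term0/(leq_trans iN).
rewrite (big_cat_nat (leq0n m) (ltnW mN)) /= big_nat_cond big1 ?add0r //.
by move=> i /andP[/andP[_ im] _]; exact: term0.
Qed.

Lemma series_cylinder k U : nbhs (series k) U ->
  exists m, cylinder k `I_m `<=` series @^-1` U.
Proof.
move=> Uk; have [W [W0 _ W_add]] := nbhs0_split_add (nbhs_translate0 Uk).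
have [n VW] := V_base W0; exists n.+1 => k' k'k.
pose D := prod_mul k' (prod_inv k).
have -> : k' = prod_mul D k.
  by apply: functional_extensionality_dep => i; rewrite /D /prod_mul /prod_inv mulgKV.
have D1 i : (i < n.+1)%N -> (D i : cyclic_factor ord i) = 1%g.
  by move=> /k'k ki; rewrite /D /prod_mul /prod_inv ki mulgV.
have [N WN] := filter_ex (near_cvg_subl (@partial_sum_cvg D) W0).
rewrite /= seriesM addrC -(subrK (partial_sum D N) (series D)).
apply: W_add WN _; apply: VW; rewrite (@partial_sum_from D n.+1 N D1).
exact: chain_sum (chain_series_term D) (ltnSn n).
Qed.

Lemma series_continuous : continuous series.
Proof.
move=> k U /= Uk; have [m mU] := series_cylinder Uk.
apply: filterS mU _.
exact: (@nbhs_cylinder nat (fun n => cyclic_factor ord n : choiceType) k `I_m (finite_II m)).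
Qed.

Lemma series_eq0 k : series k = 0 -> k = prod_one (cyclic_factor ord).
Proof.
move=> k0; suff k1 n : (k n : cyclic_factor ord n) = 1%g.
  exact: functional_extensionality_dep.
apply: contrapT => /eqP kn1.
have [m km1 m_min] :=
  ex_minnP (ex_intro (fun n => (k n : cyclic_factor ord n) != 1%g) n kn1).
have k_lt_m i : (i < m)%N -> (k i : cyclic_factor ord i) = 1%g.
  by move=> im; apply/eqP; apply: contraTT im => /m_min; rewrite -leqNgt.
have km_ord : (0 < nat_of_ord (k m : 'Z_(ord m)) < ord m)%N.
  apply/andP; split.
    by rewrite lt0n; apply: contra km1 => /eqP km0; apply/eqP; exact: val_inj.
  by rewrite -[X in (_ < X)%N](Zp_cast (chain_order_gt1 chainV m)).
have mN_near : \forall N \near \oo, (m.+1 < N)%N by exists m.+2.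
have [N [mN VN]] := filter_ex
  (filterI mN_near (near_cvg_subl (@partial_sum_cvg k) (chain_nbhs chainV m.+1))).
have ps_split : partial_sum k N = series_term k m +
    (series_term k m.+1 + \sum_(m.+2 <= i < N) series_term k i).
  by rewrite (@partial_sum_from k m N k_lt_m) big_ltn ?(ltnW mN) // big_ltn.
have := chain_avoids chainV km_ord (chain_series_term k m.+1)
  (@chain_sum _ m.+1 m.+2 N (chain_series_term k) (ltnSn m.+1)) VN.
by apply; rewrite k0 sub0r ps_split /series_term addrA subrr.
Qed.

Lemma series_injective : injective series.
Proof. exact: prod_morph_inj seriesM series_eq0. Qed.

Lemma series_range_infinite : ~ finite_set (range series).
Proof.
pose unit_vec n : P := fun i =>
  if i == n then (inZp 1 : 'Z_(ord i)) else (1 : cyclic_factor ord i)%g.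
have unit_vec_inj : injective unit_vec.
  move=> n n' e; apply/eqP; apply: contraT => nn'.
  have := congr1 (fun z : P => nat_of_ord (z n : 'Z_(ord n))) e.
  by rewrite /unit_vec eqxx (negbTE nn') /= modn_small.
move=> fin; have unit_vec_series_inj :
    {in (series \o unit_vec) @^-1` range series &, injective (series \o unit_vec)}.
  by move=> n n' _ _ /= /series_injective /unit_vec_inj.
apply: infinite_nat; rewrite -(_ : (series \o unit_vec) @^-1` range series = setT).
  exact: finite_preimage unit_vec_series_inj fin.
by rewrite predeqE => n; split => // _; exists (unit_vec n).
Qed.

End SeriesEmbedding.

Lemma not_NSS_embedding (G : topologicalZmodType) :
  hausdorff_space G -> group_complete G -> torsion_group G ->
  (exists B : nat -> set G, (forall n, nbhs (0 : G) (B n)) /\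
     forall U, nbhs (0 : G) U -> exists n, B n `<=` U) ->
  ~ NSS G ->
  exists (ord : nat -> nat)
         (phi : prod_topology (fun n => discrete_topology (cyclic_factor ord n)) -> G),
    [/\ forall k k', phi (prod_mul k k') = phi k + phi k', top_embedding phi,
        ~ finite_set (range phi), compact (range phi) & zero_dim_subspace (range phi)].
Proof.
move=> hausG complG torG [B [B_nbhs B_base]] notNSS.
have [V [x [ord [chainV VB]]]] := exists_cyclic_chain hausG torG notNSS B_nbhs.
have V_base U : nbhs (0 : G) U -> exists n, V n `<=` U.
  by move=> /B_base [n BU]; exists n; exact: subset_trans (VB n) BU.
have cptP : compact [set: prod_topology (fun n => discrete_topology (cyclic_factor ord n))].
  exact: (@discrete_prod_compact nat (fun n => cyclic_factor ord n : finType)).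
have phi_cont := series_continuous chainV hausG complG V_base.
have phi_inj := series_injective chainV hausG complG V_base.
exists ord, (@series G x ord); split.
- exact: seriesM chainV hausG complG V_base.
- exact: compact_top_embedding cptP hausG phi_cont phi_inj.
- exact: series_range_infinite chainV hausG complG V_base.
- exact: compact_range cptP phi_cont.
- exact: zero_dim_range cptP hausG phi_cont phi_inj (@discrete_prod_clopen_base _ _).
Qed.

Theorem theorem8p5 (G : topologicalZmodType) :
  ~ finite_set [set: G] -> metrizable G -> group_complete G -> torsion_group G ->
  (~ NSS G <-> contains_infinite_product_of_finite_groups G) /\
  (~ NSS G -> exists H : set G,
      [/\ is_subgroup H, ~ finite_set H, compact H & zero_dim_subspace H]).
Proof.
move=> _ metrG complG torG.
have embed := not_NSS_embedding (metrizable_hausdorff metrG) complG torG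
  (metrizable_nbhs_base metrG 0).
split; first split.
- move=> /embed [ord [phi [phiM emb _ _ _]]].
  exists nat, (cyclic_factor ord); split; first exact: infinite_nat.
  by split; [move=> n; rewrite card_ord | exists phi].
- exact: infinite_product_not_NSS.
- move=> /embed [ord [phi [phiM _ phi_inf phi_cpt phi_zd]]].
  exists (range phi); split => //.
  exact: (@is_subgroup_prod_image nat (cyclic_factor ord) G phi phiM setT).
Qed.
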